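(* Let $G$ be $\mathbb{T}$ or $\mathbb{O}$, and let $R_{ij},R_{ji},R_i,R_j\in SO(3)$ satisfy $$\{R_{ij}^T g R_{ji} : g\in G\}=\{R_i^T g R_j : g\in G\}.$$ Then $$\{\pm R_{ij}^Te_{kl}R_{ji}\}_{k,l=1}^3=\{\pm (v_i^{(k)})^Tv_j^{(l)}\}_{k,l=1}^3,$$ where $v_i^{(k)}$ is the $k$-th row of $R_i$ and $v_j^{(l)}$ is the $l$-th row of $R_j$.
   Context: In the fixed coordinate system, $\mathbb{O}$ is the group of all $3\times3$ signed permutation matrices (exactly one nonzero entry, equal to $\pm1$, in each row and column) of determinant $1$, and $\mathbb{T}\subset\mathbb{O}$ is the 12-element subgroup of matrices $DP$ with $P$ the permutation matrix of an even permutation of $\{1,2,3\}$ and $D$ diagonal with entries $\pm1$, $\det D=1$. For $k,l\in\{1,2,3\}$, $e_{kl}\in\mathbb{R}^{3\times3}$ is the single-entry matrix with $(k,l)$ entry $1$ and all other entries $0$. Rows are treated as $1\times3$ row vectors, so $(v_i^{(k)})^Tv_j^{(l)}$ is a $3\times3$ rank-one matrix. The notation $\{\pm M_{kl}\}_{k,l=1}^3$ denotes the set $\{M_{kl}\}_{k,l}\cup\{-M_{kl}\}_{k,l}$. *)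

From mathcomp Require Import all_boot all_order all_algebra all_fingroup.
Set Implicit Arguments. Unset Strict Implicit. Unset Printing Implicit Defensive.
Import Order.TTheory GRing.Theory Num.Theory.
Local Open Scope ring_scope.

Section Defs.
Variable R : realFieldType.

Definition SO3 (A : 'M[R]_3) : Prop := A^T *m A = 1%:M /\ \det A = 1.

Definition signed_perm_mx (A : 'M[R]_3) : Prop :=
  (forall i j, A i j = 0 \/ A i j = 1 \/ A i j = -1) /\
  (forall i : 'I_3, #|[set j : 'I_3 | A i j != 0]| = 1%N) /\
  (forall j : 'I_3, #|[set i : 'I_3 | A i j != 0]| = 1%N).

Definition octa_group (A : 'M[R]_3) : Prop := signed_perm_mx A /\ \det A = 1.

Definition tetra_group (A : 'M[R]_3) : Prop :=
  exists (s : 'S_3) (d : 'rV[R]_3),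
    ~~ odd_perm s /\ (forall k, d 0 k = 1 \/ d 0 k = -1) /\
    \det (diag_mx d) = 1 /\ A = diag_mx d *m perm_mx s.
End Defs.

From mathcomp Require Import all_boot all_order all_algebra all_fingroup.
From mathcomp Require Import ring lra.
Import GRing.Theory Num.Theory.
Local Open Scope ring_scope.

(* Write P := Ri Rij^T and Q := Rji Rj^T; only T <= G <= O is used.  The
   hypothesis says that g |-> P g Q maps G into itself, so P Q lies in G, and
   for g in T both Q^T g Q = (P Q)^T (P g Q) and P g P^T = (P g Q) (P Q)^T are
   products of two signed permutation matrices, hence have entries in
   {0, 1, -1}.  For a column q of an orthogonal matrix, conjugating the
   half-turn about axis k gives 2 q_k^2 - 1 in {0, 1, -1}, so q_k^2 is 0, 1/2
   or 1, and conjugating the 3-cycle gives q_1 q_2 + q_2 q_3 + q_3 q_1 in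
   {0, 1, -1}, which excludes 1/2.  Hence P and Q are signed permutation
   matrices, P e_kl Q = +-e_ab, and Rij^T e_kl Rji = Ri^T (P e_kl Q) Rj is
   +-(row a Ri)^T (row b Rj); the converse is the same argument with the two
   pairs exchanged. *)

Section SignedPermConjugation.
Set Implicit Arguments. Unset Strict Implicit.
Variable R : realFieldType.

Definition zero_or_sign (x : R) : Prop := x = 0 \/ x = 1 \/ x = -1.

Definition sign_mx m n (A : 'M[R]_(m, n)) : Prop := forall i j, zero_or_sign (A i j).

Lemma zero_or_signP (x : R) : zero_or_sign x <-> x ^+ 2 = 0 \/ x ^+ 2 = 1.
Proof.
split=> [[->|[->|->]]|[/eqP|/eqP]]; rewrite ?expr0n ?sqrrN ?expr1n; auto.
- by rewrite sqrf_eq0 => /eqP; left.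
- by rewrite sqrf_eq1 => /orP[]/eqP; right; auto.
Qed.

Lemma zero_or_signM (x y : R) :
  zero_or_sign x -> zero_or_sign y -> zero_or_sign (x * y).
Proof. by rewrite !zero_or_signP exprMn => -[]-> []->; rewrite ?mul0r ?mulr0 ?mulr1; auto. Qed.

Lemma zero_or_sign_dot n (f g : 'I_n -> R) k :
  (forall i, i != k -> f i = 0) -> zero_or_sign (f k) -> zero_or_sign (g k) ->
  zero_or_sign (\sum_i f i * g i).
Proof.
move=> f0 fk gk; rewrite (bigD1 k) //= big1 ?addr0; first exact: zero_or_signM.
by move=> i /f0 ->; rewrite mul0r.
Qed.

Lemma sqr_of_half_turn_form (x : R) :
  zero_or_sign (2 * x ^+ 2 - 1) -> [\/ x ^+ 2 = 0, x ^+ 2 = 2^-1 | x ^+ 2 = 1].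
Proof. by case=> [|[]] h; [constructor 2|constructor 3|constructor 1]; lra. Qed.

Lemma zero_or_sign_of_forms (x y z : R) :
  x ^+ 2 + y ^+ 2 + z ^+ 2 = 1 ->
  zero_or_sign (2 * x ^+ 2 - 1) -> zero_or_sign (2 * y ^+ 2 - 1) ->
  zero_or_sign (x * y + y * z + z * x) ->
  zero_or_sign x.
Proof.
(* If x^2 = 1/2, one of y, z vanishes and the form is a product of square 1/4. *)
move=> norm1 /sqr_of_half_turn_form hx /sqr_of_half_turn_form hy /zero_or_signP hf.
have [x0|x_half|x1] := hx; apply/zero_or_signP; [by left | exfalso | by right].
have vanish (t : R) : t ^+ 2 = 0 -> t = 0 by move/eqP; rewrite sqrf_eq0 => /eqP.
have [/vanish y0|y_half|y1] := hy; last by have := sqr_ge0 z; lra.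
- have z_half : z ^+ 2 = 2^-1 by move: norm1; rewrite y0 expr0n /=; lra.
  by move: hf; rewrite y0 mulr0 mul0r !add0r exprMn z_half x_half; lra.
- have /vanish z0 : z ^+ 2 = 0 by lra.
  by move: hf; rewrite z0 mulr0 mul0r !addr0 exprMn y_half x_half; lra.
Qed.

Lemma sign_unit_col n (u : 'cV[R]_n) :
  (forall i, zero_or_sign (u i 0)) -> \sum_i u i 0 ^+ 2 = 1 ->
  exists a (s : bool), u = (-1) ^+ s *: delta_mx a 0.
Proof.
move=> su norm1.
have sq i : u i 0 ^+ 2 = if u i 0 != 0 then 1 else 0.
  by case: (su i) => [|[]] ->; rewrite ?expr0n ?sqrrN ?expr1n ?eqxx ?oppr_eq0 ?oner_eq0.
have /cards1P[a supp] : #|[set i | u i 0 != 0]| == 1%N.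
  rewrite -(pnatr_eq1 R) -sum1dep_card natr_sum big_mkcond -[X in _ == X]norm1.
  by apply/eqP/eq_bigr => i _; rewrite sq; case: (_ != 0).
have suppE i : (u i 0 != 0) = (i == a) by rewrite -in_set1 -supp inE.
have [s ua] : exists s : bool, u a 0 = (-1) ^+ s.
  have [ua0|[ua|ua]] := su a; last by exists true.
  - by move: (suppE a); rewrite eqxx ua0 eqxx.
  - by exists false.
exists a, s; apply/matrixP => i j; rewrite ord1 !mxE eqxx andbT.
case: (eqVneq i a) => [->|ia]; first by rewrite ua mulr1.
by rewrite mulr0; apply/eqP; rewrite -[_ == 0]negbK suppE ia.
Qed.

Lemma sign_mx_tr m n (A : 'M[R]_(m, n)) : sign_mx A -> sign_mx A^T.
Proof. by move=> sA i j; rewrite mxE. Qed.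

Lemma orthogonal_sign_col n (P : 'M[R]_n) k :
  P^T *m P = 1%:M -> sign_mx P ->
  exists a (s : bool), col k P = (-1) ^+ s *: delta_mx a 0.
Proof.
move=> PtP sP; apply: sign_unit_col => [i|]; first by rewrite mxE.
move/matrixP/(_ k k): PtP; rewrite !mxE eqxx mulr1n => <-.
by apply: eq_bigr => i _; rewrite !mxE expr2.
Qed.

Lemma orthogonal_sign_conj_delta n (P Q : 'M[R]_n) k l :
  P^T *m P = 1%:M -> Q *m Q^T = 1%:M -> sign_mx P -> sign_mx Q ->
  exists a b (s : bool), P *m delta_mx k l *m Q = (-1) ^+ s *: delta_mx a b.
Proof.
move=> PtP QQt sP sQ.
have [a [s Pk]] := orthogonal_sign_col k PtP sP.
have [b [t Ql]] : exists b (t : bool), col l Q^T = (-1) ^+ t *: delta_mx b 0.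
  by apply: orthogonal_sign_col; [rewrite trmxK | exact: sign_mx_tr].
exists a, b, (s (+) t).
rewrite -(mul_delta_mx (0 : 'I_1)) mulmxA -colE Pk -mulmxA -rowE.
rewrite -[row l Q]trmxK tr_row Ql linearZ /= trmx_delta.
by rewrite -scalemxAl -scalemxAr scalerA -signr_addb mul_delta_mx.
Qed.

Lemma tr_row_mul_row m n p (A : 'M[R]_(m, n)) (B : 'M[R]_(m, p)) k l :
  (row k A)^T *m row l B = A^T *m delta_mx k l *m B.
Proof.
by rewrite tr_row colE rowE mulmxA -(mulmxA _ (delta_mx k 0)) mul_delta_mx.
Qed.

Lemma signed_perm_mx_tr (A : 'M[R]_3) : signed_perm_mx A -> signed_perm_mx A^T.
Proof.
case=> entries [rows cols]; split; first exact: sign_mx_tr.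
by split=> i; [apply: etrans (cols i) | apply: etrans (rows i)];
  apply: eq_card => j; rewrite !inE mxE.
Qed.

Lemma signed_perm_mx_col (A : 'M[R]_3) j :
  signed_perm_mx A -> exists k, forall i, i != k -> A i j = 0.
Proof.
case=> _ [_ /(_ j)/eqP/cards1P[k Ek]]; exists k => i ik.
by apply/eqP; apply: contraNT ik => Aij; rewrite -in_set1 -Ek inE.
Qed.

Lemma signed_perm_mulTmx (h v : 'M[R]_3) :
  signed_perm_mx h -> sign_mx v -> sign_mx (h^T *m v).
Proof.
move=> sh sv i j; have [k hk] := signed_perm_mx_col i sh.
rewrite mxE; under eq_bigr do rewrite mxE.
by apply: (zero_or_sign_dot (k := k)) => //; apply: sh.1.
Qed.

Lemma signed_perm_mulmxT (h v : 'M[R]_3) :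
  signed_perm_mx h -> sign_mx v -> sign_mx (v *m h^T).
Proof.
move=> sh sv i j.
have := signed_perm_mulTmx (signed_perm_mx_tr sh) (sign_mx_tr sv) j i.
by rewrite -trmx_mul mxE.
Qed.

Lemma tetra_diag (d : 'rV[R]_3) :
  (forall k, d 0 k = 1 \/ d 0 k = -1) -> \det (diag_mx d) = 1 ->
  tetra_group (diag_mx d).
Proof. by move=> d_sign d_det; exists 1%g, d; rewrite odd_perm1 perm_mx1 mulmx1. Qed.

Lemma tetra_perm (s : 'S_3) : ~~ odd_perm s -> tetra_group (perm_mx s : 'M[R]_3).
Proof.
move=> even_s; exists s, (const_mx 1); rewrite diag_const_mx det1 mul1mx.
by split=> //; split=> [k|//]; rewrite mxE; left.
Qed.

Lemma tetra_sub_octa (g : 'M[R]_3) : tetra_group g -> octa_group g.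
Proof.
case=> s [d [even_s [d_sign [det_d ->]]]].
have gE i j : (diag_mx d *m perm_mx s) i j = d 0 i * (s i == j)%:R.
  by rewrite mul_diag_mx perm_mxEsub !mxE.
have d_neq0 i : d 0 i != 0 by case: (d_sign i) => ->; rewrite ?oppr_eq0 oner_eq0.
have supp i j : ((diag_mx d *m perm_mx s) i j != 0) = (s i == j).
  by rewrite gE; case: (s i == j); rewrite /= ?mulr1 ?mulr0 ?eqxx ?d_neq0.
split; last by rewrite det_mulmx det_d det_perm (negbTE even_s) expr0 mulr1.
split; [|split].
- move=> i j; rewrite gE; case: (s i == j); rewrite /= ?mulr1 ?mulr0; last by left.
  by case: (d_sign i); right; [left|right].
- move=> i; apply/eqP/cards1P; exists (s i).
  by apply/setP => j; rewrite !inE supp eq_sym.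
- move=> j; apply/eqP/cards1P; exists ((s^-1)%g j).
  by apply/setP => i; rewrite !inE supp (canF_eq (permK s)).
Qed.

Definition half_turn (k : 'I_3) : 'M[R]_3 :=
  diag_mx (\row_j (if j == k then 1 else -1)).

Lemma tetra_half_turn k : tetra_group (half_turn k).
Proof.
apply: tetra_diag => [j|]; first by rewrite mxE; case: (j == k); [left|right].
rewrite det_diag (bigD1 k) //= mxE eqxx mul1r.
rewrite (eq_bigr (fun _ => -1)) => [|j /negbTE jk]; last by rewrite mxE jk.
by rewrite prodr_const cardC1 card_ord sqrrN expr1n.
Qed.

Lemma half_turnE k : half_turn k = 2 *: delta_mx k k - 1%:M.
Proof.
apply/matrixP => i j; rewrite !mxE.
case: (eqVneq i j) => [<-|ij] /=; last first.
  rewrite mulr0n subr0; case: (eqVneq i k) => [<-|_]; last by rewrite mulr0.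
  by rewrite [j == i]eq_sym (negbTE ij) mulr0.
by rewrite andbb; case: (i == k); rewrite /= mulr1n ?mulr1 ?mulr0 ?sub0r //; lra.
Qed.

Lemma half_turn_conj_diag n (Q : 'M[R]_(3, n)) k j :
  (Q^T *m half_turn k *m Q) j j = 2 * Q k j ^+ 2 - (Q^T *m Q) j j.
Proof.
rewrite half_turnE mulmxBr mulmxBl mulmx1 -scalemxAr -scalemxAl -tr_row_mul_row.
by rewrite !mxE big_ord1 !mxE expr2.
Qed.

Lemma perm_mx_conj_diag n (Q : 'M[R]_n) s j :
  (Q^T *m perm_mx s *m Q) j j = \sum_m Q m j * Q (s m) j.
Proof. by rewrite -mulmxA -row_permE mxE; apply: eq_bigr => m _; rewrite !mxE. Qed.

Notation i0 := (ord0 : 'I_3).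
Notation i1 := (lift ord0 ord0 : 'I_3).
Notation i2 := (lift ord0 (lift ord0 ord0) : 'I_3).

Lemma ord3P (i : 'I_3) : [\/ i = i0, i = i1 | i = i2].
Proof.
by case: i => -[|[|[|//]]] lt_i3; [constructor 1|constructor 2|constructor 3];
  apply: val_inj.
Qed.

Definition cycle3 : 'S_3 := (tperm i1 i2 * tperm i0 i1)%g.

Lemma cycle3_even : ~~ odd_perm cycle3.
Proof. by rewrite odd_permM !odd_tperm. Qed.

Lemma cycle3E : [/\ cycle3 i0 = i1, cycle3 i1 = i2 & cycle3 i2 = i0].
Proof. by rewrite !permM; split; apply/val_inj; rewrite !permE. Qed.

Lemma sign_mx_of_tetra_conj (Q : 'M[R]_3) :
  Q^T *m Q = 1%:M -> (forall g, tetra_group g -> sign_mx (Q^T *m g *m Q)) ->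
  sign_mx Q.
Proof.
move=> QtQ sQ i j.
have norm1 : Q i0 j ^+ 2 + Q i1 j ^+ 2 + Q i2 j ^+ 2 = 1.
  move/matrixP/(_ j j): QtQ; rewrite !mxE eqxx mulr1n => <-.
  by rewrite !big_ord_recl big_ord0 addr0 addrA !mxE !expr2.
have turn k : zero_or_sign (2 * Q k j ^+ 2 - 1).
  by have := sQ _ (tetra_half_turn k) j j; rewrite half_turn_conj_diag QtQ mxE eqxx.
have cyc : zero_or_sign (Q i0 j * Q i1 j + Q i1 j * Q i2 j + Q i2 j * Q i0 j).
  have := sQ _ (tetra_perm cycle3_even) j j; rewrite perm_mx_conj_diag.
  by case: cycle3E => c0 c1 c2; rewrite !big_ord_recl big_ord0 addr0 addrA c0 c1 c2.
have rot (a b c : R) : a + b + c = b + c + a by ring.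
case: (ord3P i) => ->.
- exact: (zero_or_sign_of_forms norm1 (turn i0) (turn i1) cyc).
- by apply: (zero_or_sign_of_forms (z := Q i0 j) _ (turn i1) (turn i2)); rewrite -rot.
- by apply: (zero_or_sign_of_forms (z := Q i1 j) _ (turn i2) (turn i0)); rewrite rot.
Qed.

Lemma sign_mx_of_conj_invariant (G : 'M[R]_3 -> Prop) (P Q : 'M[R]_3) :
  (forall g, tetra_group g -> G g) -> (forall g, G g -> signed_perm_mx g) ->
  P^T *m P = 1%:M -> Q *m Q^T = 1%:M -> (forall g, G g -> G (P *m g *m Q)) ->
  sign_mx P /\ sign_mx Q.
Proof.
move=> TG Gsp PtP QQt PGQ.
have G1 : G 1%:M by rewrite -perm_mx1; apply/TG/tetra_perm; rewrite odd_perm1.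
have G_PQ : G (P *m Q) by have := PGQ _ G1; rewrite mulmx1.
split.
- rewrite -[P]trmxK; apply/sign_mx_tr/sign_mx_of_tetra_conj => [|g Tg].
    by rewrite trmxK mulmx1C.
  have -> : P^T^T *m g *m P^T = P *m g *m Q *m (P *m Q)^T.
    by rewrite trmxK trmx_mul !mulmxA -(mulmxA _ Q) QQt mulmx1.
  exact: signed_perm_mulmxT (Gsp _ G_PQ) (Gsp _ (PGQ _ (TG _ Tg))).1.
- apply: sign_mx_of_tetra_conj => [|g Tg]; first exact: mulmx1C.
  have -> : Q^T *m g *m Q = (P *m Q)^T *m (P *m g *m Q).
    by rewrite trmx_mul !mulmxA -[Q^T *m P^T *m P]mulmxA PtP mulmx1.
  exact: signed_perm_mulTmx (Gsp _ G_PQ) (Gsp _ (PGQ _ (TG _ Tg))).1.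
Qed.

Lemma conj_delta_transfer (G : 'M[R]_3 -> Prop) (A B C D : 'M[R]_3) :
  (forall g, tetra_group g -> G g) -> (forall g, G g -> signed_perm_mx g) ->
  A^T *m A = 1%:M -> B^T *m B = 1%:M -> C^T *m C = 1%:M -> D^T *m D = 1%:M ->
  (forall g, G g -> exists2 g', G g' & A^T *m g *m B = C^T *m g' *m D) ->
  forall k l, exists a b (s : bool),
    A^T *m delta_mx k l *m B = (-1) ^+ s *: (C^T *m delta_mx a b *m D).
Proof.
move=> TG Gsp AtA BtB CtC DtD AGB k l.
pose P := C *m A^T; pose Q := B *m D^T.
have PtP : P^T *m P = 1%:M.
  by rewrite trmx_mul trmxK mulmxA -(mulmxA A) CtC mulmx1 mulmx1C.
have QQt : Q *m Q^T = 1%:M.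
  by rewrite trmx_mul trmxK mulmxA -(mulmxA B) DtD mulmx1 mulmx1C.
have PGQ g : G g -> G (P *m g *m Q).
  case/AGB => g' Gg' e; have -> : P *m g *m Q = C *m (A^T *m g *m B) *m D^T.
    by rewrite !mulmxA.
  by rewrite e !mulmxA (mulmx1C CtC) mul1mx -mulmxA (mulmx1C DtD) mulmx1.
have [sP sQ] := sign_mx_of_conj_invariant TG Gsp PtP QQt PGQ.
have [a [b [s e]]] := orthogonal_sign_conj_delta k l PtP QQt sP sQ.
exists a, b, s; have -> : A^T *m delta_mx k l *m B = C^T *m (P *m delta_mx k l *m Q) *m D.
  by rewrite !mulmxA CtC mul1mx -[_ *m D^T *m D]mulmxA DtD mulmx1.
by rewrite e -scalemxAr -scalemxAl.
Qed.

Lemma eq_pm_sign m n (M X Y : 'M[R]_(m, n)) (s : bool) :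
  X = (-1) ^+ s *: Y -> M = X \/ M = - X -> M = Y \/ M = - Y.
Proof. by case: s => -> /=; rewrite ?expr0 ?expr1 ?scale1r ?scaleN1r ?opprK; tauto. Qed.

End SignedPermConjugation.

Theorem proposition4 (R : realFieldType) (G : 'M[R]_3 -> Prop)
  (Rij Rji Ri Rj : 'M[R]_3) :
  (G = @tetra_group R \/ G = @octa_group R) ->
  SO3 Rij -> SO3 Rji -> SO3 Ri -> SO3 Rj ->
  (forall M : 'M[R]_3,
     (exists g, G g /\ M = Rij^T *m g *m Rji) <->
     (exists g, G g /\ M = Ri^T *m g *m Rj)) ->
  forall M : 'M[R]_3,
    (exists k l : 'I_3,
        M = Rij^T *m delta_mx k l *m Rji \/ M = - (Rij^T *m delta_mx k l *m Rji)) <->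
    (exists k l : 'I_3,
        M = (row k Ri)^T *m row l Rj \/ M = - ((row k Ri)^T *m row l Rj)).
Proof.
move=> G_TO [RijO _] [RjiO _] [RiO _] [RjO _] sameG M.
have TG g : tetra_group g -> G g by case: G_TO => -> // /tetra_sub_octa.
have Gsp g : G g -> signed_perm_mx g by case: G_TO => -> => [/tetra_sub_octa|] [].
have fwd g : G g -> exists2 g', G g' & Rij^T *m g *m Rji = Ri^T *m g' *m Rj.
  by move=> Gg; have [g' [Gg' e]] := (sameG _).1 (ex_intro _ g (conj Gg erefl)); exists g'.
have bwd g : G g -> exists2 g', G g' & Ri^T *m g *m Rj = Rij^T *m g' *m Rji.
  by move=> Gg; have [g' [Gg' e]] := (sameG _).2 (ex_intro _ g (conj Gg erefl)); exists g'.
split=> -[k [l pmM]].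
- have [a [b [s e]]] := conj_delta_transfer TG Gsp RijO RjiO RiO RjO fwd k l.
  by exists a, b; rewrite tr_row_mul_row; apply: eq_pm_sign e pmM.
- have [a [b [s e]]] := conj_delta_transfer TG Gsp RiO RjO RijO RjiO bwd k l.
  by exists a, b; rewrite tr_row_mul_row in pmM; apply: eq_pm_sign e pmM.
Qed.
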